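(* Let $\mathcal{H}$ be a complex Hilbert space of finite dimension $n\ge2$, $m\ge2$, $\mathcal{G}=(\{1,\dots,m\},E)$ a connected undirected graph, $\alpha\in(0,1)$, and $\sigma$ a self-adjoint operator on $\mathcal{H}$. Consider the quantum gossip algorithm: at each time $t$ an edge $(j,k)\in E$ is selected and $\rho(t+1)=(1-\alpha)\rho(t)+\alpha U_{(j,k)}\rho(t)U_{(j,k)}^\dagger$, where edges are selected either by periodically cycling through all edges, or independently at random according to a fixed distribution $\{q_{j,k}>0\}$ (in which case one considers either the expected evolution $\rho(t+1)=\sum q_{j,k}\big((1-\alpha)\rho(t)+\alpha U_{(j,k)}\rho(t)U_{(j,k)}^\dagger\big)$ or individual random trajectories). Let $z_\ell(t)=\mathrm{Tr}(\rho(t)\sigma^{(\ell)})$. Then under each of these edge-selection strategies, for every $\ell\in\{1,\dots,m\}$, $z_\ell(t)$ asymptotically converges to $\frac1m\sum_{k=1}^m z_k(0)$ (for random trajectories, in the sense that for any $\delta,\varepsilon>0$ there is $T$ with $\mathbb{P}[\sum_\ell |z_\ell(T)-\bar z|^2>\varepsilon\sum_\ell|z_\ell(0)-\bar z|^2]<\delta$, where $\bar z=\frac1m\sum_k z_k(0)$).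
   Context: For $X$ an operator on $\mathcal{H}$, $X^{(i)}=I^{\otimes(i-1)}\otimes X\otimes I^{\otimes(m-i)}$; $U_{(j,k)}$ is the unitary on $\mathcal{H}^{\otimes m}$ swapping tensor factors $j$ and $k$. *)

From HB Require Import structures.
From mathcomp Require Import all_boot all_order all_algebra.
From mathcomp Require Import all_fingroup complex.
From mathcomp Require Import reals.
Set Implicit Arguments. Unset Strict Implicit. Unset Printing Implicit Defensive.
Import Order.TTheory GRing.Theory Num.Theory.
Local Open Scope ring_scope.
Local Open Scope complex_scope.

Section QGossip.
Variables (R : realType) (n m : nat).
Local Notation C := R[i].

(* computational basis of H^{\otimes m}, H = C^n: functions 'I_m -> 'I_n
   (tensor factor i+1 of the paper is index i : 'I_m) *)
Definition basis := {ffun 'I_m -> 'I_n}.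

Definition op := basis -> basis -> C.

Definition opmul (A B : op) : op := fun x y => \sum_(z : basis) A x z * B z y.
Definition adj (A : op) : op := fun x y => (A y x)^*.
Definition trace (A : op) : C := \sum_(x : basis) A x x.
Definition opadd (A B : op) : op := fun x y => A x y + B x y.
Definition opscale (c : C) (A : op) : op := fun x y => c * A x y.

Definition psd (A : op) : Prop :=
  forall v : basis -> C, 0 <= \sum_(x : basis) \sum_(y : basis) (v x)^* * A x y * v y.
Definition density (A : op) : Prop := psd A /\ trace A = 1.

(* X^{(i)} = I^{\otimes(i-1)} \otimes X \otimes I^{\otimes(m-i)} *)
Definition embed1 (X : 'M[C]_n) (i : 'I_m) : op :=
  fun x y => X (x i) (y i) * (\prod_(l : 'I_m | l != i) (x l == y l)%:R).

(* U_{(j,k)}: |y> |-> |y with factors j and k swapped> *)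
Definition swap_basis (j k : 'I_m) (y : basis) : basis :=
  [ffun l => y (tperm j k l)].
Definition swapU (j k : 'I_m) : op :=
  fun x y => (x == swap_basis j k y)%:R.

Definition gossip_step (alpha : R) (p : 'I_m * 'I_m) (rho : op) : op :=
  opadd (opscale (1 - alpha)%:C rho)
        (opscale alpha%:C (opmul (opmul (swapU p.1 p.2) rho) (adj (swapU p.1 p.2)))).

Definition run (alpha : R) (s : seq ('I_m * 'I_m)) (rho0 : op) : op :=
  foldl (fun rho p => gossip_step alpha p rho) rho0 s.
Definition traj (alpha : R) (sel : nat -> 'I_m * 'I_m) (rho0 : op) (t : nat) : op :=
  run alpha (mkseq sel t) rho0.

Definition edges (e : rel 'I_m) : seq ('I_m * 'I_m) :=
  [seq p <- enum [pred p : 'I_m * 'I_m | true] | (nat_of_ord p.1 < nat_of_ord p.2)%N && e p.1 p.2].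

Definition simple_graph (e : rel 'I_m) := symmetric e /\ irreflexive e.
Definition connected_graph (e : rel 'I_m) := forall j k, connect e j k.

Definition exp_step (alpha : R) (e : rel 'I_m) (q : 'I_m * 'I_m -> R) (rho : op) : op :=
  fun x y => \sum_(p <- edges e) (q p)%:C * gossip_step alpha p rho x y.
Fixpoint exp_traj alpha e q (rho0 : op) (t : nat) : op :=
  if t is t'.+1 then exp_step alpha e q (exp_traj alpha e q rho0 t') else rho0.

Definition zloc (sigma : 'M[C]_n) (rho : op) (l : 'I_m) : C :=
  trace (opmul rho (embed1 sigma l)).
Definition zavg (sigma : 'M[C]_n) (rho : op) : C :=
  (m%:R)^-1 * \sum_(k : 'I_m) zloc sigma rho k.

Definition dev (sigma : 'M[C]_n) (rho : op) (zbar : C) : R :=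
  \sum_(l : 'I_m) ComplexField.Normc.normc (zloc sigma rho l - zbar) ^+ 2.

Definition cconv (u : nat -> C) (a : C) : Prop :=
  forall eps : R, 0 < eps -> exists T : nat, forall t, (T <= t)%N -> ComplexField.Normc.normc (u t - a) < eps.

(* probability, under i.i.d. selection of edges of e with law q (q supported
   on edges e), that the state after the first T selections satisfies P *)
Definition prob_traj (alpha : R) (e : rel 'I_m) (q : 'I_m * 'I_m -> R) (rho0 : op)
  (T : nat) (P : op -> bool) : R :=
  \sum_(s : T.-tuple ('I_m * 'I_m) | all (fun p => p \in edges e) s)
     (\prod_(i < T) q (tnth s i)) *
     (P (run alpha s rho0))%:R.
End QGossip.

From HB Require Import structures.
From mathcomp Require Import all_boot all_order all_algebra.
From mathcomp Require Import all_fingroup complex.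
From mathcomp Require Import boolp reals.
From mathcomp Require Import ring lra.
Set Implicit Arguments. Unset Strict Implicit. Unset Printing Implicit Defensive.
Import Order.TTheory GRing.Theory Num.Theory.
Local Open Scope ring_scope.
Local Open Scope complex_scope.

(* Conjugating by the swap U_(j,k) permutes the tensor factors j and k, so one gossip
   step acts on the local expectations z_l = Tr(rho sigma^(l)) as the classical averaging
   z <- (1 - alpha) z + alpha (z o (j k)); its real and imaginary parts are real
   consensus dynamics.  The average of the z_l is invariant, and a step on the edge
   (j,k) lowers the squared deviation V from the average by exactly
   2 alpha (1 - alpha) |z_j - z_k|^2.  Along paths of a connected graph, V is at most
   m 4^m times the sum of the squared gaps over the edges, so one round through all
   edges, or one random step in expectation, contracts V by a fixed factor below 1.
   This gives geometric convergence of the periodic and expected evolutions, and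
   Markov's inequality turns the expected contraction into the statement on random
   trajectories. *)

Lemma sub_le_contract (R : realFieldType) (V D M c : R) :
  0 < M -> 0 <= c -> V <= M * D -> V - c * D <= (1 - c / M) * V.
Proof.
move=> M_gt0 c_ge0 VD; rewrite mulrBl mul1r lerB // mulrAC -mulrA ler_wpM2l //.
by rewrite ler_pdivrMr // mulrC.
Qed.

Lemma contraction_rate_range (R : realFieldType) (c M : R) :
  0 < c <= 1 -> 1 <= M -> 0 <= 1 - c / M < 1.
Proof.
move=> /andP[c_gt0 c_le1] M_ge1; have M_gt0 : 0 < M by apply: lt_le_trans M_ge1.
rewrite subr_ge0 ler_pdivrMr // mul1r (le_trans c_le1) //=.
by rewrite ltrBlDr ltrDl divr_gt0.
Qed.

Lemma sqr_convex_comb (R : realFieldType) (I : eqType) (r : seq I) (q w : I -> R) c :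
  {in r, forall i, 0 <= q i} -> \sum_(i <- r) q i = 1 ->
  (\sum_(i <- r) q i * w i - c) ^+ 2 <= \sum_(i <- r) q i * (w i - c) ^+ 2.
Proof.
move=> q_ge0 q_sum1; set B := \sum_(i <- r) q i * w i - c.
have sumB : \sum_(i <- r) q i * (w i - c) = B.
  by rewrite /B -[c in RHS]mul1r -q_sum1 mulr_suml -sumrB; apply: eq_bigr => i _; ring.
have : 0 <= \sum_(i <- r) q i * (w i - c - B) ^+ 2.
  by rewrite big_seq sumr_ge0 // => i ir; rewrite mulr_ge0 ?q_ge0 ?sqr_ge0.
have -> : \sum_(i <- r) q i * (w i - c - B) ^+ 2 = \sum_(i <- r) q i * (w i - c) ^+ 2
    - 2 * B * \sum_(i <- r) q i * (w i - c) + B ^+ 2 * \sum_(i <- r) q i.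
  by rewrite !mulr_sumr -sumrB -big_split /=; apply: eq_bigr => i _; ring.
by rewrite sumB q_sum1; lra.
Qed.

Lemma expr_bernoulli_le1 (R : realFieldType) (r : R) T :
  0 <= r <= 1 -> r ^+ T * (1 + T%:R * (1 - r)) <= 1.
Proof.
case/andP=> r0 r1; elim: T => [|T IH]; first by rewrite expr0 mul0r addr0 mul1r.
have rT0 : 0 <= r ^+ T := exprn_ge0 T r0.
have rT1 : r ^+ T <= 1 := exprn_ile1 T r0 r1.
rewrite exprS -natr1; move: IH rT0 rT1; set x := r ^+ T; set t := (T%:R : R) => IH rT0 rT1.
have h1 : 0 <= r * (1 - x * (1 + t * (1 - r))) by rewrite mulr_ge0 // subr_ge0.
have h2 : 0 <= r * (1 - r) * (1 - x) by rewrite !mulr_ge0 // subr_ge0.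
nra.
Qed.

Lemma exists_expr_lt (R : archiRealFieldType) (r eps : R) :
  0 <= r < 1 -> 0 < eps -> exists T, r ^+ T < eps.
Proof.
case/andP=> r0 r1 eps_gt0; set g := 1 - r; have g_gt0 : 0 < g by rewrite subr_gt0.
have b_ge0 : 0 <= (eps * g)^-1 by rewrite invr_ge0 ltW // mulr_gt0.
exists (Num.bound (eps * g)^-1); set T := Num.bound _.
have := archi_boundP b_ge0; rewrite -/T -[(eps * g)^-1]mul1r ltr_pdivrMr ?mulr_gt0 //.
have r01 : 0 <= r <= 1 by rewrite r0 ltW.
have := expr_bernoulli_le1 T r01; rewrite -/g.
have := exprn_ge0 T r0; set x := r ^+ T; set t := (T%:R : R) => x0 xT Tg.
have t0 : 0 <= t by rewrite ler0n.
nra.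
Qed.

Lemma seq_pos_lower_bound (R : realDomainType) (T : eqType) (s : seq T) (f : T -> R) :
  {in s, forall x, 0 < f x} -> exists c, [/\ 0 < c, c <= 1 & {in s, forall x, c <= f x}].
Proof.
elim: s => [|y s IH] f_gt0; first by exists 1.
have [|c [c_gt0 c_le1 c_le]] := IH; first by move=> x xs; rewrite f_gt0 // inE xs orbT.
exists (Num.min c (f y)); split; first by rewrite lt_min c_gt0 f_gt0 ?mem_head.
  by rewrite ge_min c_le1.
by move=> x; rewrite inE => /orP[/eqP-> | /c_le xs]; rewrite ge_min ?lexx ?orbT ?xs.
Qed.

Lemma mkseqD (T : Type) (f : nat -> T) a b :
  mkseq f (a + b) = mkseq f a ++ mkseq (fun i => f (a + i)%N) b.
Proof. by rewrite /mkseq iotaD map_cat -[in iota a b](addn0 a) iotaDl -map_comp. Qed.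

Lemma big_tuple_cons (R : nmodType) (X : finType) (T : nat) (F : T.+1.-tuple X -> R) :
  \sum_(s : T.+1.-tuple X) F s = \sum_(x : X) \sum_(t : T.-tuple X) F [tuple of x :: t].
Proof.
rewrite pair_big /= (reindex (fun p : X * T.-tuple X => [tuple of p.1 :: p.2])) //=.
exists (fun s => (thead s, [tuple of behead s])) => [[x t] _ | s _] /=.
  by rewrite theadE; congr pair; apply: val_inj.
by rewrite -tuple_eta.
Qed.

Section Consensus.
Variables (R : realFieldType) (m : nat) (a : R).
Implicit Types (u : 'I_m -> R) (c : R) (p : 'I_m * 'I_m) (s : seq ('I_m * 'I_m)).

Definition gossip p u : 'I_m -> R := fun l => (1 - a) * u l + a * u (tperm p.1 p.2 l).
Definition gossip_run s u := foldl (fun u p => gossip p u) u s.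
Definition sqdev c u := \sum_l (u l - c) ^+ 2.
Definition mean u := (m%:R)^-1 * \sum_l u l.
Definition sqgap u p := (u p.1 - u p.2) ^+ 2.
Fixpoint run_sqgaps s u :=
  if s is p :: s' then sqgap u p + run_sqgaps s' (gossip p u) else 0.

Lemma sqdev_gossip p c u : p.1 != p.2 ->
  sqdev c (gossip p u) = sqdev c u - 2 * a * (1 - a) * sqgap u p.
Proof.
move=> np; rewrite /sqdev (bigD1 p.1) // (bigD1 p.2) 1?eq_sym //=.
rewrite [in RHS](bigD1 p.1) // [in RHS](bigD1 p.2) 1?eq_sym //=.
have -> : \sum_(l | (l != p.1) && (l != p.2)) (gossip p u l - c) ^+ 2
        = \sum_(l | (l != p.1) && (l != p.2)) (u l - c) ^+ 2.
  apply: eq_bigr => l /andP[l1 l2].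
  by rewrite /gossip tpermD 1?eq_sym //; congr (_ ^+ 2); ring.
rewrite /gossip /sqgap tpermL tpermR; ring.
Qed.

Lemma run_sqgaps_ge0 s u : 0 <= run_sqgaps s u.
Proof. by elim: s u => [|p s IH] u //=; rewrite addr_ge0 ?sqr_ge0. Qed.

Lemma sqdev_gossip_run s c u : {in s, forall p, p.1 != p.2} ->
  sqdev c (gossip_run s u) = sqdev c u - 2 * a * (1 - a) * run_sqgaps s u.
Proof.
elim: s u => [|p s IH] u hs /=; first by rewrite mulr0 subr0.
rewrite IH => [|q hq]; last by apply: hs; rewrite inE hq orbT.
by rewrite sqdev_gossip ?hs ?mem_head //; ring.
Qed.

Hypothesis a01 : 0 <= a <= 1.

Lemma sqr_gossip_drift p u x : (u x - gossip p u x) ^+ 2 <= sqgap u p.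
Proof.
case/andP: a01 => a0 a1; have a21 : a ^+ 2 <= 1 by rewrite expr_le1.
have drift y z : (y - ((1 - a) * y + a * z)) ^+ 2 = a ^+ 2 * (z - y) ^+ 2 by ring.
rewrite /gossip /sqgap; case: tpermP => [->|->|_ _].
- by rewrite drift (_ : (_ - _) ^+ 2 = (u p.1 - u p.2) ^+ 2) ?ler_piMl ?sqr_ge0 //; ring.
- by rewrite drift ler_piMl ?sqr_ge0.
- by rewrite (_ : u x - _ = 0) ?expr0n ?sqr_ge0 //; ring.
Qed.

(* The gap of [p] before the run differs from its gap when [p] is activated by the
   drifts of its two endpoints, and each drift is bounded by the gap of an earlier step. *)
Lemma sqgap_le_run_sqgaps s u p : p \in s -> sqgap u p <= 9 ^+ size s * run_sqgaps s u.
Proof.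
elim: s u => [|q s IH] u; first by rewrite in_nil.
rewrite /= inE exprS.
have N1 : 1 <= (9 : R) ^+ size s by rewrite exprn_ege1 // ler1n.
have D0 := run_sqgaps_ge0 s (gossip q u); have d0 : 0 <= sqgap u q by rewrite sqr_ge0.
case/orP=> [/eqP-> | ps]; first by nra.
move: (IH (gossip q u) ps) (sqr_gossip_drift q u p.1) (sqr_gossip_drift q u p.2).
rewrite /sqgap (_ : u p.1 - u p.2 = (u p.1 - gossip q u p.1)
   + (gossip q u p.1 - gossip q u p.2) - (u p.2 - gossip q u p.2)); last by ring.
set A := u p.1 - _; set B := _ - gossip q u p.2; set C := u p.2 - _ => hB hA hC.
have sqr3 : (A + B - C) ^+ 2 <= 3 * (A ^+ 2 + B ^+ 2 + C ^+ 2).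
  rewrite -subr_ge0 (_ : _ - _ = (A - B) ^+ 2 + (A + C) ^+ 2 + (B + C) ^+ 2); last by ring.
  by rewrite !addr_ge0 ?sqr_ge0.
nra.
Qed.

Lemma sqdev_mean_le u c : (0 < m)%N -> sqdev (mean u) u <= sqdev c u.
Proof.
move=> m_gt0; have m_neq0 : (m%:R : R) != 0 by rewrite pnatr_eq0 -lt0n.
have sum_dev0 : \sum_l (u l - mean u) = 0.
  by rewrite sumrB sumr_const card_ord /mean -mulrnAl -[_ *+ m]mulr_natr mulVf // mul1r subrr.
have -> : sqdev c u = sqdev (mean u) u + \sum_(l : 'I_m) (mean u - c) ^+ 2
                      + 2 * (mean u - c) * \sum_l (u l - mean u).
  by rewrite /sqdev mulr_sumr -!big_split /=; apply: eq_bigr => l _; ring.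
by rewrite sum_dev0 mulr0 addr0 lerDl sumr_ge0 // => l _; rewrite sqr_ge0.
Qed.

End Consensus.

Section GraphBound.
Variables (R : realFieldType) (m : nat) (e : rel 'I_m).
Implicit Types (u : 'I_m -> R) (p : 'I_m * 'I_m).

Definition graph_sqgaps u := \sum_(p <- edges e) sqgap u p.

Lemma mem_edges p : (p \in edges e) = (p.1 < p.2)%N && e p.1 p.2.
Proof. by rewrite mem_filter mem_enum andbT. Qed.

Lemma edges_neq p : p \in edges e -> p.1 != p.2.
Proof. by rewrite mem_edges => /andP[lt12 _]; rewrite neq_ltn lt12. Qed.

Lemma graph_sqgaps_ge0 u : 0 <= graph_sqgaps u.
Proof. by rewrite sumr_ge0 // => p _; rewrite sqr_ge0. Qed.

Hypotheses (e_simple : simple_graph e) (e_conn : connected_graph e).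

Lemma sqgap_le_graph_sqgaps u j k : e j k -> sqgap u (j, k) <= graph_sqgaps u.
Proof.
case: e_simple => e_sym e_irr ejk.
have le_sum p : p \in edges e -> sqgap u p <= graph_sqgaps u.
  move=> pe; rewrite /graph_sqgaps (big_rem p) //= lerDl.
  by rewrite sumr_ge0 // => q _; rewrite sqr_ge0.
case: (ltngtP j k) => [jk | kj | /val_inj jk].
- by apply: le_sum; rewrite mem_edges jk ejk.
- rewrite (_ : sqgap u (j, k) = sqgap u (k, j)); last by rewrite /sqgap /=; ring.
  by apply: le_sum; rewrite mem_edges /= kj e_sym.
- by move: ejk; rewrite jk e_irr.
Qed.

Lemma sqgap_path_le u x s : path e x s ->
  sqgap u (last x s, x) <= 4 ^+ size s * graph_sqgaps u.
Proof.
elim: s x => [|y s IH] x /=; first by rewrite /sqgap subrr expr0n mul1r graph_sqgaps_ge0.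
case/andP=> exy /IH; have := sqgap_le_graph_sqgaps u exy; rewrite /sqgap /=.
set G := graph_sqgaps u; set N := (4 : R) ^+ size s.
rewrite (_ : 4 ^+ (size s).+1 = 4 * N); last by rewrite exprS.
have N1 : 1 <= N by rewrite exprn_ege1 // ler1n.
have G0 : 0 <= G := graph_sqgaps_ge0 u.
rewrite (_ : u (last y s) - u x = (u (last y s) - u y) + (u y - u x)); last by ring.
set A := u (last y s) - u y; rewrite (_ : (u x - u y) ^+ 2 = (u y - u x) ^+ 2); last by ring.
set B := u y - u x => hB hA.
have := sqr_ge0 (A - B); nra.
Qed.

Lemma sqgap_le_connected u j k : sqgap u (k, j) <= 4 ^+ m * graph_sqgaps u.
Proof.
have /connectP[s /shortenP[s' js' uniq_s' _] ->] := e_conn j k.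
apply: le_trans (sqgap_path_le u js') _.
rewrite ler_wpM2r ?graph_sqgaps_ge0 // ler_eXn2l ?ltr1n //.
by have := max_card (mem (j :: s')); rewrite card_ord (card_uniqP uniq_s') => /ltnW.
Qed.

Lemma sqdev_mean_le_graph_sqgaps u : (0 < m)%N ->
  sqdev (mean u) u <= m%:R * 4 ^+ m * graph_sqgaps u.
Proof.
move=> m_gt0; pose j := Ordinal m_gt0.
apply: le_trans (sqdev_mean_le u (u j) m_gt0) _.
rewrite -mulrA mulr_natl -[m in _ *+ m](card_ord m) -sumr_const; apply: ler_sum => l _.
exact: sqgap_le_connected.
Qed.

Lemma edges_neq_nil : (1 < m)%N -> edges e != [::].
Proof.
move=> m_gt1; case: e_simple => _ e_irr; pose j : 'I_m := Ordinal (ltnW m_gt1).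
pose k : 'I_m := Ordinal m_gt1.
have /connectP[[|y s] /= jys jk] := e_conn j k; first by move: jk => /(congr1 val).
case/andP: jys => ejy _.
have jy : (j < y)%N.
  rewrite lt0n; apply: contraTneq ejy => y0.
  by rewrite (_ : y = j) ?e_irr //; apply: val_inj.
by apply/eqP => no_edges; have := mem_edges (j, y); rewrite no_edges in_nil jy ejy.
Qed.

End GraphBound.

Section Contraction.
Variables (R : realFieldType) (m : nat) (e : rel 'I_m) (a : R).
Hypotheses (e_simple : simple_graph e) (e_conn : connected_graph e).
Hypotheses (m_gt0 : (0 < m)%N) (a01 : 0 < a < 1).
Implicit Types (u : 'I_m -> R) (q : 'I_m * 'I_m -> R).

(* Both rates are 1 - 2 a (1 - a) / M where V <= M times the dissipated squared gaps:
   M = m 4^m K 9^K + 1 for a round of K steps, M = (m 4^m + 1) / qm for a random step. *)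
Definition round_rate (K : nat) : R :=
  1 - 2 * a * (1 - a) / (m%:R * 4 ^+ m * K%:R * 9 ^+ K + 1).
Definition step_rate (qm : R) : R :=
  1 - 2 * a * (1 - a) * qm / (m%:R * 4 ^+ m + 1).

Let gain_gt0_le1 : 0 < 2 * a * (1 - a) <= 1.
Proof. by case/andP: a01 => a0 a1; rewrite !mulr_gt0 ?subr_gt0 //=; nra. Qed.

Lemma round_rate_range K : 0 <= round_rate K < 1.
Proof.
by apply: contraction_rate_range; rewrite // lerDr !mulr_ge0 // exprn_ge0.
Qed.

Lemma step_rate_range qm : 0 < qm <= 1 -> 0 <= step_rate qm < 1.
Proof.
case/andP: gain_gt0_le1 => g0 g1 /andP[qm0 qm1].
apply: contraction_rate_range; last by rewrite lerDr !mulr_ge0 // exprn_ge0.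
by rewrite mulr_gt0 //= (le_trans _ g1) // ler_piMr // ltW.
Qed.

Lemma sqdev_round es u : perm_eq es (edges e) ->
  sqdev (mean u) (gossip_run a es u) <= round_rate (size es) * sqdev (mean u) u.
Proof.
move=> es_edges; set K := size es.
rewrite sqdev_gossip_run => [|p]; last by rewrite (perm_mem es_edges); apply: edges_neq.
case/andP: gain_gt0_le1 => g0 _.
have D0 := run_sqgaps_ge0 a es u.
apply: sub_le_contract; first by rewrite ltr_wpDl // !mulr_ge0 // exprn_ge0.
  exact: ltW.
have graph_le_run : graph_sqgaps e u <= K%:R * 9 ^+ K * run_sqgaps a es u.
  rewrite /graph_sqgaps -(perm_big _ es_edges) big_seq.
  apply: le_trans (ler_sum _ (G := fun _ => 9 ^+ K * run_sqgaps a es u) _) _.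
    by move=> p; apply: sqgap_le_run_sqgaps; case/andP: a01 => a0 a1; rewrite !ltW.
  by rewrite -big_seq big_const_seq count_predT iter_addr_0 -mulrA mulr_natl.
apply: le_trans (sqdev_mean_le_graph_sqgaps e_simple e_conn u m_gt0) _.
rewrite mulrDl mul1r ler_wpDr // -!mulrA ler_wpM2l // ler_wpM2l ?exprn_ge0 //.
by rewrite mulrA.
Qed.

Lemma sqdev_random_step q qm u :
  0 <= qm -> {in edges e, forall p, qm <= q p} -> \sum_(p <- edges e) q p = 1 ->
  \sum_(p <- edges e) q p * sqdev (mean u) (gossip a p u) <= step_rate qm * sqdev (mean u) u.
Proof.
move=> qm_ge0 q_ge_qm q_sum1; set V := sqdev (mean u) u; set c := 2 * a * (1 - a).
have c_ge0 : 0 <= c by case/andP: gain_gt0_le1 => /ltW.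
have -> : \sum_(p <- edges e) q p * sqdev (mean u) (gossip a p u)
          = V - c * \sum_(p <- edges e) q p * sqgap u p.
  rewrite big_seq (eq_bigr (fun p => q p * V - c * (q p * sqgap u p))); last first.
    by move=> p /edges_neq p12; rewrite sqdev_gossip // -/V /c; ring.
  by rewrite sumrB -mulr_suml -mulr_sumr -!big_seq q_sum1 mul1r.
have gaps_ge : qm * graph_sqgaps e u <= \sum_(p <- edges e) q p * sqgap u p.
  rewrite /graph_sqgaps mulr_sumr !big_seq; apply: ler_sum => p pe.
  by rewrite ler_wpM2r ?sqr_ge0 ?q_ge_qm.
apply: le_trans (_ : V - (c * qm) * graph_sqgaps e u <= _).
  by rewrite lerB // -mulrA ler_wpM2l.
apply: sub_le_contract; first by rewrite ltr_wpDl // mulr_ge0 // exprn_ge0.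
  exact: mulr_ge0.
apply: le_trans (sqdev_mean_le_graph_sqgaps e_simple e_conn u m_gt0) _.
by rewrite mulrDl mul1r lerDl graph_sqgaps_ge0.
Qed.

Definition gossip_mix q u : 'I_m -> R := fun l => \sum_(p <- edges e) q p * gossip a p u l.

Lemma sqdev_gossip_mix q u c : {in edges e, forall p, 0 <= q p} ->
  \sum_(p <- edges e) q p = 1 ->
  sqdev c (gossip_mix q u) <= \sum_(p <- edges e) q p * sqdev c (gossip a p u).
Proof.
move=> q_ge0 q_sum1; rewrite /sqdev.
under [X in _ <= X]eq_bigr => p _ do rewrite mulr_sumr.
rewrite [X in _ <= X]exchange_big /=; apply: ler_sum => l _.
exact: sqr_convex_comb.
Qed.

End Contraction.

Section SwapAction.
Variables (R : realType) (n m : nat) (sigma : 'M[R[i]]_n).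
Local Notation op := (op R n m).
Local Notation swap := (@swap_basis n m).

Lemma swap_basisK j k : involutive (swap j k).
Proof. by move=> y; apply/ffunP => l; rewrite !ffunE tpermK. Qed.

Lemma swap_basis_inj j k : injective (swap j k).
Proof. exact: inv_inj (swap_basisK j k). Qed.

Lemma sum_swap_delta j k (F : basis n m -> R[i]) x :
  \sum_z (x == swap j k z)%:R * F z = F (swap j k x).
Proof.
rewrite (bigD1 (swap j k x)) //= swap_basisK eqxx mul1r big1 ?addr0 // => z zx.
by rewrite (_ : (x == _) = false) ?mul0r //; apply: contraNF zx => /eqP->; rewrite swap_basisK.
Qed.

Lemma swap_conjE j k (rho : op) x y :
  opmul (opmul (swapU R j k) rho) (adj (swapU R j k)) x y = rho (swap j k x) (swap j k y).
Proof.
rewrite /opmul /adj /swapU; under eq_bigr => z _ do rewrite sum_swap_delta conjc_nat.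
under eq_bigr => z _ do rewrite mulrC.
by rewrite sum_swap_delta.
Qed.

Lemma embed1_swap l j k x y :
  embed1 sigma l (swap j k x) (swap j k y) = embed1 sigma (tperm j k l) x y.
Proof.
rewrite /embed1 !ffunE; congr (_ * _).
rewrite [RHS](reindex_inj (@perm_inj _ (tperm j k))) /=.
by apply: eq_big => i; rewrite ?(inj_eq (@perm_inj _ _)) ?ffunE.
Qed.

Lemma zloc_swap_conj j k (rho : op) l :
  zloc sigma (opmul (opmul (swapU R j k) rho) (adj (swapU R j k))) l
  = zloc sigma rho (tperm j k l).
Proof.
rewrite /zloc /trace.
transitivity (\sum_x \sum_y rho (swap j k x) (swap j k y) * embed1 sigma l y x).
  by apply: eq_bigr => x _; apply: eq_bigr => y _; rewrite swap_conjE.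
rewrite (reindex_inj (@swap_basis_inj j k)) /=; apply: eq_bigr => x _.
rewrite (reindex_inj (@swap_basis_inj j k)) /=; apply: eq_bigr => y _.
by rewrite !swap_basisK embed1_swap.
Qed.

Lemma zloc_gossip_step alpha p (rho : op) l :
  zloc sigma (gossip_step alpha p rho) l =
  (1 - alpha)%:C * zloc sigma rho l + alpha%:C * zloc sigma rho (tperm p.1 p.2 l).
Proof.
rewrite -zloc_swap_conj /zloc /trace /opmul /gossip_step /opadd /opscale.
rewrite !mulr_sumr -big_split /=; apply: eq_bigr => x _.
by rewrite !mulr_sumr -big_split /=; apply: eq_bigr => y _; rewrite mulrDl !mulrA.
Qed.

Lemma zloc_exp_step alpha e q (rho : op) l :
  zloc sigma (exp_step alpha e q rho) l =
  \sum_(p <- edges e) (q p)%:C * zloc sigma (gossip_step alpha p rho) l.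
Proof.
rewrite /zloc /trace /opmul /exp_step.
under [RHS]eq_bigr => p _ do rewrite mulr_sumr.
rewrite [RHS]exchange_big /=; apply: eq_bigr => x _.
under [RHS]eq_bigr => p _ do rewrite mulr_sumr.
rewrite [RHS]exchange_big /=; apply: eq_bigr => y _.
by rewrite mulr_suml; apply: eq_bigr => p _; rewrite mulrA.
Qed.

Lemma sum_zloc_gossip_step alpha p (rho : op) :
  \sum_l zloc sigma (gossip_step alpha p rho) l = \sum_l zloc sigma rho l.
Proof.
under eq_bigr => l _ do rewrite zloc_gossip_step.
rewrite big_split /= -!mulr_sumr (reindex_inj (@perm_inj _ (tperm p.1 p.2))) /=.
by rewrite -mulrDl -rmorphD /= subrK mul1r.
Qed.

Lemma zavg_gossip_step alpha p (rho : op) :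
  zavg sigma (gossip_step alpha p rho) = zavg sigma rho.
Proof. by rewrite /zavg sum_zloc_gossip_step. Qed.

Lemma zavg_run alpha s (rho : op) : zavg sigma (run alpha s rho) = zavg sigma rho.
Proof. by elim: s rho => [|p s IH] rho //=; rewrite IH zavg_gossip_step. Qed.

Lemma zavg_exp_step alpha e q (rho : op) : \sum_(p <- edges e) q p = 1 ->
  zavg sigma (exp_step alpha e q rho) = zavg sigma rho.
Proof.
move=> q_sum1; rewrite /zavg; congr (_ * _).
under eq_bigr => l _ do rewrite zloc_exp_step.
rewrite exchange_big /=.
under eq_bigr => p _ do rewrite -mulr_sumr sum_zloc_gossip_step.
by rewrite -mulr_suml -rmorph_sum q_sum1 mul1r.
Qed.

End SwapAction.

Section RealParts.
Variables (R : realType) (n m : nat) (sigma : 'M[R[i]]_n) (alpha : R) (e : rel 'I_m).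
Hypotheses (e_simple : simple_graph e) (e_conn : connected_graph e).
Hypotheses (m_gt0 : (0 < m)%N) (alpha01 : 0 < alpha < 1).
Local Notation op := (op R n m).

Section ScalarPart.
Variable f : R[i] -> R.
Hypotheses (fD : {morph f : x y / x + y}) (fZ : forall (x : R) y, f (x%:C * y) = x * f y).

Definition zpart (rho : op) : 'I_m -> R := fun l => f (zloc sigma rho l).

Let f_sum (I : Type) (r : seq I) (F : I -> R[i]) :
  f (\sum_(i <- r) F i) = \sum_(i <- r) f (F i).
Proof.
have f0 : f 0 = 0 by rewrite -[0 in LHS](mul0r 0) fZ mul0r.
by rewrite (big_morph f fD f0).
Qed.

Lemma zpart_gossip_step p rho : zpart (gossip_step alpha p rho) = gossip alpha p (zpart rho).
Proof. by apply: funext => l; rewrite /zpart zloc_gossip_step fD !fZ. Qed.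

Lemma zpart_run s rho : zpart (run alpha s rho) = gossip_run alpha s (zpart rho).
Proof. by elim: s rho => [|p s IH] rho //=; rewrite -zpart_gossip_step -IH. Qed.

Lemma zpart_exp_step q rho : zpart (exp_step alpha e q rho) = gossip_mix e alpha q (zpart rho).
Proof.
apply: funext => l; rewrite /zpart zloc_exp_step f_sum.
by apply: eq_bigr => p _; rewrite fZ -zpart_gossip_step.
Qed.

Lemma zpart_zavg rho : f (zavg sigma rho) = mean (zpart rho).
Proof. by rewrite /zavg -(rmorph_nat (real_complex R)) -fmorphV fZ f_sum. Qed.

Lemma sqdev_zpart_run_le s rho c : {subset s <= edges e} ->
  sqdev c (zpart (run alpha s rho)) <= sqdev c (zpart rho).
Proof.
move=> s_edges; rewrite zpart_run sqdev_gossip_run => [|p /s_edges/edges_neq //].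
case/andP: alpha01 => a0 a1.
by rewrite gerBl mulr_ge0 ?run_sqgaps_ge0 // !mulr_ge0 // ?subr_ge0 ltW.
Qed.

Lemma sqdev_zpart_round es rho : perm_eq es (edges e) ->
  sqdev (f (zavg sigma rho)) (zpart (run alpha es rho))
  <= round_rate m alpha (size es) * sqdev (f (zavg sigma rho)) (zpart rho).
Proof. by move=> es_edges; rewrite zpart_zavg zpart_run (sqdev_round e_simple). Qed.

Lemma sqdev_zpart_random_step q qm rho :
  0 <= qm -> {in edges e, forall p, qm <= q p} -> \sum_(p <- edges e) q p = 1 ->
  \sum_(p <- edges e) q p * sqdev (f (zavg sigma rho)) (zpart (gossip_step alpha p rho))
  <= step_rate m alpha qm * sqdev (f (zavg sigma rho)) (zpart rho).
Proof.
move=> qm_ge0 q_ge_qm q_sum1; rewrite zpart_zavg.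
under eq_bigr => p _ do rewrite zpart_gossip_step.
exact: sqdev_random_step.
Qed.

Lemma sqdev_zpart_exp_step q rho c :
  {in edges e, forall p, 0 <= q p} -> \sum_(p <- edges e) q p = 1 ->
  sqdev c (zpart (exp_step alpha e q rho))
  <= \sum_(p <- edges e) q p * sqdev c (zpart (gossip_step alpha p rho)).
Proof.
move=> q_ge0 q_sum1; rewrite zpart_exp_step.
under eq_bigr => p _ do rewrite zpart_gossip_step.
exact: sqdev_gossip_mix.
Qed.

End ScalarPart.

Lemma ReD : {morph @complex.Re R : x y / x + y}. Proof. by case=> ? ? [] ? ?. Qed.
Lemma ImD : {morph @complex.Im R : x y / x + y}. Proof. by case=> ? ? [] ? ?. Qed.
Lemma ReZ (x : R) (y : R[i]) : complex.Re (x%:C * y) = x * complex.Re y.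
Proof. by case: y => ? ? /=; rewrite mul0r subr0. Qed.
Lemma ImZ (x : R) (y : R[i]) : complex.Im (x%:C * y) = x * complex.Im y.
Proof. by case: y => ? ? /=; rewrite mul0r addr0. Qed.

Lemma dev_ReIm (rho : op) c :
  dev sigma rho c = sqdev (complex.Re c) (zpart (@complex.Re R) rho)
                    + sqdev (complex.Im c) (zpart (@complex.Im R) rho).
Proof.
rewrite /dev /sqdev -big_split /=; apply: eq_bigr => l _.
rewrite /zpart; case: (zloc _ _ _) => x y; case: c => ? ? /=.
by rewrite sqr_sqrtr // addr_ge0 ?sqr_ge0.
Qed.

Lemma dev_ge0 (rho : op) c : 0 <= dev sigma rho c.
Proof. by rewrite sumr_ge0 // => l _; rewrite sqr_ge0. Qed.

Lemma sqr_normc_le_dev (rho : op) c l :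
  ComplexField.Normc.normc (zloc sigma rho l - c) ^+ 2 <= dev sigma rho c.
Proof. by rewrite /dev (bigD1 l) //= lerDl sumr_ge0 // => k _; rewrite sqr_ge0. Qed.

Lemma dev_run_le s rho c : {subset s <= edges e} ->
  dev sigma (run alpha s rho) c <= dev sigma rho c.
Proof.
move=> s_edges; rewrite !dev_ReIm; apply: lerD.
  exact: (sqdev_zpart_run_le ReD ReZ).
exact: (sqdev_zpart_run_le ImD ImZ).
Qed.

Lemma dev_round es rho : perm_eq es (edges e) ->
  dev sigma (run alpha es rho) (zavg sigma rho)
  <= round_rate m alpha (size es) * dev sigma rho (zavg sigma rho).
Proof.
move=> es_edges; rewrite !dev_ReIm mulrDr; apply: lerD.
  exact: (sqdev_zpart_round ReD ReZ).
exact: (sqdev_zpart_round ImD ImZ).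
Qed.

Lemma dev_random_step q qm rho :
  0 <= qm -> {in edges e, forall p, qm <= q p} -> \sum_(p <- edges e) q p = 1 ->
  \sum_(p <- edges e) q p * dev sigma (gossip_step alpha p rho) (zavg sigma rho)
  <= step_rate m alpha qm * dev sigma rho (zavg sigma rho).
Proof.
move=> qm_ge0 q_ge_qm q_sum1.
under eq_bigr => p _ do rewrite dev_ReIm mulrDr.
rewrite big_split dev_ReIm mulrDr; apply: lerD.
  exact: (sqdev_zpart_random_step ReD ReZ).
exact: (sqdev_zpart_random_step ImD ImZ).
Qed.

Lemma dev_exp_step q qm rho :
  0 < qm -> {in edges e, forall p, qm <= q p} -> \sum_(p <- edges e) q p = 1 ->
  dev sigma (exp_step alpha e q rho) (zavg sigma rho)
  <= step_rate m alpha qm * dev sigma rho (zavg sigma rho).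
Proof.
move=> qm_gt0 q_ge_qm q_sum1.
apply: le_trans _ (dev_random_step rho (ltW qm_gt0) q_ge_qm q_sum1).
have q_ge0 : {in edges e, forall p, 0 <= q p}.
  by move=> p /q_ge_qm; apply: le_trans; rewrite ltW.
under eq_bigr => p _ do rewrite dev_ReIm mulrDr.
rewrite big_split dev_ReIm; apply: lerD.
  exact: (sqdev_zpart_exp_step ReD ReZ).
exact: (sqdev_zpart_exp_step ImD ImZ).
Qed.

End RealParts.

Lemma zloc_cconv (R : realType) (n m : nat) (sigma : 'M[R[i]]_n) (rho : nat -> op R n m)
    (zb : R[i]) (r D : R) (k : nat -> nat) :
  0 <= r < 1 -> 0 <= D -> (forall N, exists T, forall t, (T <= t)%N -> (N <= k t)%N) ->
  (forall t, dev sigma (rho t) zb <= r ^+ k t * D) ->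
  forall l, cconv (fun t => zloc sigma (rho t) l) zb.
Proof.
move=> r01 D0 k_unbounded dev_le l eps eps_gt0; case/andP: (r01) => r0 r1.
have D1_gt0 : 0 < D + 1 by rewrite ltr_wpDl.
have [N rN] := exists_expr_lt r01 (divr_gt0 (exprn_gt0 2 eps_gt0) D1_gt0).
have [T kT] := k_unbounded N; exists T => t /kT Nk.
have : ComplexField.Normc.normc (zloc sigma (rho t) l - zb) ^+ 2 < eps ^+ 2.
  apply: le_lt_trans (sqr_normc_le_dev _ _ _ l) _; apply: le_lt_trans (dev_le t) _.
  apply: le_lt_trans (_ : r ^+ N * (D + 1) < _); last by rewrite -ltr_pdivlMr.
  by rewrite ler_pM ?exprn_ge0 ?lerDl // ler_wiXn2l // ltW.
have : 0 <= ComplexField.Normc.normc (zloc sigma (rho t) l - zb).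
  by case: (_ - _) => ? ? /=; rewrite sqrtr_ge0.
set x := ComplexField.Normc.normc _; nra.
Qed.

Section GossipConvergence.
Variables (R : realType) (n m : nat) (e : rel 'I_m) (alpha : R)
  (sigma : 'M[R[i]]_n) (rho0 : op R n m).
Hypotheses (m_gt1 : (1 < m)%N) (e_simple : simple_graph e) (e_conn : connected_graph e)
  (alpha01 : 0 < alpha < 1).
Local Notation zbar := (zavg sigma rho0).
Local Notation dev0 := (dev sigma rho0 zbar).

Let m_gt0 : (0 < m)%N. Proof. exact: ltnW. Qed.

Lemma exp_traj_cconv q : {in edges e, forall p, 0 < q p} -> \sum_(p <- edges e) q p = 1 ->
  forall l, cconv (fun t => zloc sigma (exp_traj alpha e q rho0 t) l) zbar.
Proof.
move=> q_gt0 q_sum1; have [qm [qm_gt0 qm_le1 q_ge_qm]] := seq_pos_lower_bound q_gt0.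
have zavg_t t : zavg sigma (exp_traj alpha e q rho0 t) = zbar.
  by elim: t => //= t <-; rewrite zavg_exp_step.
have qm01 : 0 < qm <= 1 by rewrite qm_gt0 qm_le1.
have rate01 := step_rate_range m alpha01 qm01.
apply: (zloc_cconv (k := fun t => t) rate01 (dev_ge0 sigma rho0 zbar)) => [N | t].
  by exists N.
elim: t => [|t IH] /=; first by rewrite expr0 mul1r.
rewrite -{1}(zavg_t t).
apply: le_trans (dev_exp_step sigma e_simple e_conn m_gt0 alpha01 _ qm_gt0 q_ge_qm q_sum1) _.
by rewrite zavg_t exprS -mulrA ler_wpM2l //; case/andP: rate01.
Qed.

Lemma periodic_traj_cconv es sel : perm_eq es (edges e) ->
  (forall t, sel t = nth (sel 0%N) es (t %% size es)) ->
  forall l, cconv (fun t => zloc sigma (traj alpha sel rho0 t) l) zbar.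
Proof.
move=> es_edges sel_periodic; set K := size es.
have K_gt0 : (0 < K)%N.
  by rewrite /K (perm_size es_edges) lt0n size_eq0 edges_neq_nil.
have sel_edges t : sel t \in edges e.
  by rewrite -(perm_mem es_edges) sel_periodic mem_nth // ltn_pmod.
pose X N := run alpha (mkseq sel (N * K)) rho0.
have X_succ N : X N.+1 = run alpha es (X N).
  rewrite /X mulSnr mkseqD /run foldl_cat; congr foldl.
  rewrite -[RHS](mkseq_nth (sel 0%N)); apply/eq_in_map => i.
  by rewrite mem_iota add0n => /andP[_ iK] /=; rewrite sel_periodic modnMDl modn_small.
have zavg_X N : zavg sigma (X N) = zbar by rewrite zavg_run.
have rate01 := round_rate_range m alpha01 K.
have dev_X N : dev sigma (X N) zbar <= round_rate m alpha K ^+ N * dev0.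
  elim: N => [|N IH]; first by rewrite /X mul0n expr0 mul1r.
  rewrite X_succ -(zavg_X N).
  apply: le_trans (dev_round sigma e_simple e_conn m_gt0 alpha01 _ es_edges) _.
  by rewrite zavg_X exprS -mulrA ler_wpM2l //; case/andP: rate01.
apply: (zloc_cconv (k := fun t => t %/ K)%N rate01 (dev_ge0 sigma rho0 zbar)) => [N | t].
  by exists (N * K)%N => t /(leq_div2r K); rewrite mulnK.
apply: le_trans _ (dev_X (t %/ K)%N); rewrite /traj {1}(divn_eq t K) mkseqD /run foldl_cat.
apply: (dev_run_le sigma alpha01) => p /mapP[i _ ->].
exact: sel_edges.
Qed.

Section RandomSelection.
Variable q : 'I_m * 'I_m -> R.
Hypotheses (q_gt0 : {in edges e, forall p, 0 < q p}) (q_sum1 : \sum_(p <- edges e) q p = 1).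

Definition expected_dev (T : nat) (c : R[i]) (rho : op R n m) : R :=
  \sum_(s : T.-tuple ('I_m * 'I_m) | all (fun p => p \in edges e) s)
     (\prod_(i < T) q (tnth s i)) * dev sigma (run alpha s rho) c.

Lemma expected_dev_succ T c rho :
  expected_dev T.+1 c rho
  = \sum_(p <- edges e) q p * expected_dev T c (gossip_step alpha p rho).
Proof.
rewrite /expected_dev big_mkcond big_tuple_cons.
rewrite [RHS]big_uniq /=; last by rewrite filter_uniq // enum_uniq.
rewrite [RHS]big_mkcond /=; apply: eq_bigr => p _.
case: ifP => pe /=; last by rewrite big1.
rewrite mulr_sumr [RHS]big_mkcond /=; apply: eq_bigr => s _; case: ifP => //= _.
by rewrite big_ord_recl tnth0 mulrA; congr (_ * _ * _); apply: eq_bigr => i _; rewrite tnthS.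
Qed.

Lemma expected_dev_le qm : 0 < qm <= 1 -> {in edges e, forall p, qm <= q p} ->
  forall T rho, expected_dev T (zavg sigma rho) rho
                <= step_rate m alpha qm ^+ T * dev sigma rho (zavg sigma rho).
Proof.
move=> qm01 q_ge_qm; have /andP[rate_ge0 _] := step_rate_range m alpha01 qm01.
elim=> [|T IH] rho.
  rewrite /expected_dev (big_pred1 [tuple]) => [|s]; last by rewrite tuple0.
  by rewrite big_ord0 expr0 !mul1r.
rewrite expected_dev_succ exprSr -mulrA.
apply: le_trans (_ : \sum_(p <- edges e) q p * (step_rate m alpha qm ^+ T
                         * dev sigma (gossip_step alpha p rho) (zavg sigma rho)) <= _).
  rewrite !big_seq; apply: ler_sum => p pe; rewrite ler_wpM2l ?(ltW (q_gt0 pe)) //.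
  by rewrite -(zavg_gossip_step sigma alpha p rho).
under eq_bigr => p _ do rewrite mulrCA.
rewrite -mulr_sumr ler_wpM2l ?exprn_ge0 //.
case/andP: qm01 => qm_gt0 _.
exact: (dev_random_step sigma e_simple e_conn m_gt0 alpha01 rho (ltW qm_gt0)).
Qed.

Lemma prob_traj_markov T c x : 0 < x ->
  prob_traj alpha e q rho0 T (fun rho => dev sigma rho c > x) <= expected_dev T c rho0 / x.
Proof.
move=> x_gt0; rewrite /prob_traj /expected_dev mulr_suml; apply: ler_sum => s /allP s_edges.
have w_ge0 : 0 <= \prod_(i < T) q (tnth s i).
  by apply: prodr_ge0 => i _; rewrite ltW ?q_gt0 ?s_edges ?mem_tnth.
rewrite -mulrA ler_wpM2l //=; case: (boolP (x < _)) => [dev_gt | _].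
  by rewrite ler_pdivlMr // mul1r ltW.
by rewrite divr_ge0 ?dev_ge0 ?ltW.
Qed.

Lemma random_traj_dev_small delta eps : 0 < delta -> 0 < eps ->
  exists T, prob_traj alpha e q rho0 T (fun rho => dev sigma rho zbar > eps * dev0) < delta.
Proof.
move=> delta_gt0 eps_gt0; have [qm [qm_gt0 qm_le1 q_ge_qm]] := seq_pos_lower_bound q_gt0.
have qm01 : 0 < qm <= 1 by rewrite qm_gt0 qm_le1.
have [T rateT] := exists_expr_lt (step_rate_range m alpha01 qm01) (mulr_gt0 delta_gt0 eps_gt0).
exists T; have [dev0_eq0 | dev0_neq0] := eqVneq dev0 0.
  rewrite /prob_traj big1 // => s /allP s_edges.
  rewrite (_ : (_ < _) = false) ?mulr0 // dev0_eq0 mulr0 ltNge.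
  by rewrite -dev0_eq0 (dev_run_le sigma (e := e) alpha01).
have dev0_gt0 : 0 < dev0 by rewrite lt_def dev0_neq0 dev_ge0.
apply: le_lt_trans (prob_traj_markov _ _ (mulr_gt0 eps_gt0 dev0_gt0)) _.
rewrite ltr_pdivrMr ?mulr_gt0 //; apply: le_lt_trans (expected_dev_le qm01 q_ge_qm T rho0) _.
by rewrite mulrA ltr_pM2r.
Qed.

End RandomSelection.

End GossipConvergence.

Theorem corollary1 (R : realType) (n m : nat) (e : rel 'I_m) (alpha : R)
    (sigma : 'M[R[i]]_n) (rho0 : op R n m) :
  (2 <= n)%N -> (2 <= m)%N ->
  simple_graph e -> connected_graph e ->
  0 < alpha < 1 ->
  (forall a b, sigma a b = (sigma b a)^* ) ->
  density rho0 ->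
  let z := fun (rho : op R n m) (l : 'I_m) => zloc sigma rho l in
  let zbar := zavg sigma rho0 in
  (* periodic cycling through all edges *)
  (forall (es : seq ('I_m * 'I_m)) (sel : nat -> 'I_m * 'I_m),
      perm_eq es (edges e) ->
      (forall t, sel t = nth (sel 0%N) es (t %% size es)) ->
      forall l : 'I_m, cconv (fun t => z (traj alpha sel rho0 t) l) zbar) /\
  (* random selection with distribution q: expected evolution *)
  (forall q : 'I_m * 'I_m -> R,
      (forall p, p \in edges e -> 0 < q p) ->
      \sum_(p <- edges e) q p = 1 ->
      forall l : 'I_m, cconv (fun t => z (exp_traj alpha e q rho0 t) l) zbar) /\
  (* random selection with distribution q: individual trajectories *)
  (forall q : 'I_m * 'I_m -> R,
      (forall p, p \in edges e -> 0 < q p) ->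
      \sum_(p <- edges e) q p = 1 ->
      forall delta eps : R, 0 < delta -> 0 < eps ->
      exists T : nat,
        prob_traj alpha e q rho0 T
          (fun rho => dev sigma rho zbar > eps * dev sigma rho0 zbar) < delta).
Proof.
move=> _ m_gt1 e_simple e_conn alpha01 _ _ z zbar; split; [|split].
- exact: periodic_traj_cconv.
- exact: exp_traj_cconv.
- exact: random_traj_dev_small.
Qed.
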